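(* The total wave-fluid potential vorticity obeys $$(\partial_t+\mathcal{L}_{\widehat{\mathbf{v}}})\Big(\mathrm{curl}\,\widehat{\mathbf{v}}+\nabla\widetilde{w}\times\nabla\zeta\Big)\cdot d\mathbf{S}=-\nabla\rho^{-1}\times\nabla p\cdot d\mathbf{S}.$$ Introducing a stream function $\psi$ with $\widehat{\mathbf{v}}=\widehat{\mathbf{z}}\times\nabla\psi$, the 2D Laplacian $\Delta$ and the Jacobian $J(a,b):=\widehat{\mathbf{z}}\cdot\nabla a\times\nabla b$, this reads $$\partial_tq+J(\psi,q)=-J(\rho^{-1},\nabla p),\qquad q:=\Delta\psi+J(\widetilde{w},\zeta).$$
   Context: On a free surface $z=\zeta(\mathbf{x},t)$ over horizontal coordinates $\mathbf{x}=(x,y)$, the WCIFS (wave-current interaction on a free surface) equations govern the horizontal velocity $\widehat{\mathbf{v}}$, areal density $D$ (constrained to $D=1$ by the pressure $p$, so $\mathrm{div}\,\widehat{\mathbf{v}}=0$), buoyancy $\rho$, elevation $\zeta$ and vertical velocity $\widehat{w}$: $(\partial_t+\mathcal{L}_{\widehat{\mathbf{v}}})(\widehat{\mathbf{v}}\cdot d\mathbf{x}+\widetilde{w}\,d\zeta)=d\varpi-\frac1\rho dp$; $\partial_tD+\mathrm{div}(D\widehat{\mathbf{v}})=0$; $\partial_t\rho+\widehat{\mathbf{v}}\cdot\nabla\rho=0$; $\partial_t\zeta+\widehat{\mathbf{v}}\cdot\nabla\zeta=\widehat{w}(1+\epsilon|\nabla\zeta|^2)$; $\partial_t\widetilde{w}+\widehat{\mathbf{v}}\cdot\nabla\widetilde{w}=-g+\frac{2\epsilon}{D\rho}\mathrm{div}(\widehat{w}\,\widetilde{\mu}\,\nabla\zeta)$,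 with $\varpi=\tfrac12(|\widehat{\mathbf{v}}|^2+\widehat{w}^2)-g\zeta$, $\widetilde{\mu}=D\rho\widetilde{w}$, $\widetilde{w}=\widehat{w}/(1+\epsilon|\nabla\zeta|^2)$. $\mathcal{L}_{\widehat{\mathbf{v}}}$ is the Lie derivative along $\widehat{\mathbf{v}}$. *)

From Stdlib Require Import Reals List.
From Coquelicot Require Import Coquelicot.
Open Scope R_scope.

(* A (time-dependent) scalar field on the horizontal plane: f t x y. *)
Definition field := R -> R -> R -> R.

Definition dt (f : field) : field := fun t x y => Derive (fun s => f s x y) t.
Definition dx (f : field) : field := fun t x y => Derive (fun s => f t s y) x.
Definition dy (f : field) : field := fun t x y => Derive (fun s => f t x s) y.

Definition partial (i : nat) (f : field) : field :=
  match i with 0 => dt f | 1 => dx f | _ => dy f end.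

Definition smooth (f : field) : Prop :=
  forall (l : list nat) (t x y : R),
    let g := fold_right partial f l in
    ex_derive (fun s => g s x y) t /\ ex_derive (fun s => g t s y) x /\
    ex_derive (fun s => g t x s) y /\
    continuous (fun z : R * R * R => g (fst (fst z)) (snd (fst z)) (snd z)) (t, x, y).

Definition fadd (f g : field) : field := fun t x y => f t x y + g t x y.
Definition fmul (f g : field) : field := fun t x y => f t x y * g t x y.

(* z-component of grad a x grad b, i.e. the Jacobian J(a,b) = zhat . grad a x grad b. *)
Definition jac (a b : field) : field :=
  fun t x y => dx a t x y * dy b t x y - dy a t x y * dx b t x y.

Definition curl2 (v1 v2 : field) : field := fun t x y => dx v2 t x y - dy v1 t x y.

Definition div2 (v1 v2 : field) : field := fun t x y => dx v1 t x y + dy v2 t x y.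

Definition lap (f : field) : field := fun t x y => dx (dx f) t x y + dy (dy f) t x y.

(* Lie derivative of the 1-form  a1 dx + a2 dy  along (v1,v2), in coordinates:
   (L_v a)_i = v^j d_j a_i + a_j d_i v^j.  Components i = 1 (dx) and 2 (dy). *)
Definition lie1_x (v1 v2 a1 a2 : field) : field :=
  fun t x y => v1 t x y * dx a1 t x y + v2 t x y * dy a1 t x y
             + a1 t x y * dx v1 t x y + a2 t x y * dx v2 t x y.
Definition lie1_y (v1 v2 a1 a2 : field) : field :=
  fun t x y => v1 t x y * dx a2 t x y + v2 t x y * dy a2 t x y
             + a1 t x y * dy v1 t x y + a2 t x y * dy v2 t x y.

(* Lie derivative of the 2-form  w dS = w dx/\dy  along (v1,v2): coefficient of dS,
   L_v (w dS) = div(w v) dS. *)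
Definition lie2 (v1 v2 w : field) : field :=
  fun t x y => dx (fmul w v1) t x y + dy (fmul w v2) t x y.

(* The horizontal one-form  a = v.dx + wtil dzeta  obeys  (d_t + L_v) a = d varpi - rho^-1 dp.
   Taking its exterior derivative (the 2D curl), d commutes with d_t (Schwarz) and with L_v
   (Cartan's formula, here a coordinate identity), d (d varpi) = 0 and
   d (rho^-1 dp) = d rho^-1 /\ dp, while  da = (curl v + J(wtil, zeta)) dS.  For a stream
   function, curl v = Lap psi and div v = 0, so  L_v (q dS) = J(psi, q) dS. *)

From Stdlib Require Import Reals List FunctionalExtensionality.
From Coquelicot Require Import Coquelicot.
Open Scope R_scope.

Definition fconst (c : R) : field := fun _ _ _ => c.
Definition fopp (f : field) : field := fun t x y => - f t x y.
Definition fsub (f g : field) : field := fadd f (fopp g).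
Definition finv (f : field) : field := fun t x y => / f t x y.
Definition fpow (f : field) (n : nat) : field := fun t x y => f t x y ^ n.

Lemma field_ext (f g : field) : (forall t x y, f t x y = g t x y) -> f = g.
Proof. intros H; do 3 (apply functional_extensionality; intro); apply H. Qed.

Lemma fopp_fmul (f : field) : fopp f = fmul (fconst (-1)) f.
Proof. apply field_ext; intros; unfold fopp, fmul, fconst; ring. Qed.

Definition uncurry3 (f : field) (z : R * R * R) : R := f (fst (fst z)) (snd (fst z)) (snd z).

Definition continuous3 (f : field) : Prop := forall t x y, continuous (uncurry3 f) (t, x, y).

Definition line (i : nat) (f : field) (t x y : R) : R -> R :=
  match i with 0 => fun s => f s x y | 1 => fun s => f t s y | _ => fun s => f t x s end.

Definition coord (i : nat) (t x y : R) : R := match i with 0 => t | 1 => x | _ => y end.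

Definition ex_partial (i : nat) (f : field) : Prop :=
  forall t x y, ex_derive (line i f t x y) (coord i t x y).

Lemma partialE i f t x y : partial i f t x y = Derive (line i f t x y) (coord i t x y).
Proof. destruct i as [|[|i]]; reflexivity. Qed.

Lemma line_fadd i f g t x y :
  line i (fadd f g) t x y = fun s => line i f t x y s + line i g t x y s.
Proof. destruct i as [|[|i]]; reflexivity. Qed.

Lemma line_fmul i f g t x y :
  line i (fmul f g) t x y = fun s => line i f t x y s * line i g t x y s.
Proof. destruct i as [|[|i]]; reflexivity. Qed.

Lemma line_finv i f t x y : line i (finv f) t x y = fun s => / line i f t x y s.
Proof. destruct i as [|[|i]]; reflexivity. Qed.

Lemma line_fconst i c t x y : line i (fconst c) t x y = fun _ => c.
Proof. destruct i as [|[|i]]; reflexivity. Qed.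

Lemma line_coord i f t x y : line i f t x y (coord i t x y) = f t x y.
Proof. destruct i as [|[|i]]; reflexivity. Qed.

Lemma partial_fadd i f g : ex_partial i f -> ex_partial i g ->
  partial i (fadd f g) = fadd (partial i f) (partial i g).
Proof.
  intros Hf Hg; apply field_ext; intros t x y.
  rewrite !partialE, line_fadd; unfold fadd; rewrite !partialE.
  now apply Derive_plus.
Qed.

Lemma partial_fmul i f g : ex_partial i f -> ex_partial i g ->
  partial i (fmul f g) = fadd (fmul (partial i f) g) (fmul f (partial i g)).
Proof.
  intros Hf Hg; apply field_ext; intros t x y.
  rewrite partialE, line_fmul, Derive_mult, !line_coord by auto.
  unfold fadd, fmul; now rewrite !partialE.
Qed.

Lemma partial_fconst i c : partial i (fconst c) = fconst 0.
Proof.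
  apply field_ext; intros t x y.
  now rewrite partialE, line_fconst, Derive_const.
Qed.

Lemma partial_finv i f : ex_partial i f -> (forall t x y, f t x y <> 0) ->
  partial i (finv f) = fmul (fconst (-1)) (fmul (partial i f) (fmul (finv f) (finv f))).
Proof.
  intros Hf Hf0; apply field_ext; intros t x y.
  specialize (Hf0 t x y).
  rewrite partialE, line_finv, Derive_inv, line_coord by (rewrite ?line_coord; auto).
  unfold fmul, fconst, finv; rewrite partialE; field; auto.
Qed.

Lemma ex_partial_fadd i f g : ex_partial i f -> ex_partial i g -> ex_partial i (fadd f g).
Proof. intros Hf Hg t x y; rewrite line_fadd; apply (ex_derive_plus (line i f t x y)); auto. Qed.

Lemma ex_partial_fmul i f g : ex_partial i f -> ex_partial i g -> ex_partial i (fmul f g).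
Proof. intros Hf Hg t x y; rewrite line_fmul; now apply ex_derive_mult. Qed.

Lemma ex_partial_fconst i c : ex_partial i (fconst c).
Proof. intros t x y; rewrite line_fconst; apply ex_derive_const. Qed.

Lemma ex_partial_finv i f : ex_partial i f -> (forall t x y, f t x y <> 0) ->
  ex_partial i (finv f).
Proof.
  intros Hf Hf0 t x y; rewrite line_finv.
  apply ex_derive_inv; [apply Hf | rewrite line_coord; apply Hf0].
Qed.

Lemma partial_fopp i f : ex_partial i f -> partial i (fopp f) = fopp (partial i f).
Proof.
  intros Hf; rewrite !fopp_fmul, partial_fmul, partial_fconst by auto using ex_partial_fconst.
  apply field_ext; intros; unfold fadd, fmul, fconst; ring.
Qed.

Lemma partial_fsub i f g : ex_partial i f -> ex_partial i g ->
  partial i (fsub f g) = fsub (partial i f) (partial i g).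
Proof.
  intros Hf Hg; unfold fsub; rewrite partial_fadd, partial_fopp; auto.
  rewrite fopp_fmul; auto using ex_partial_fmul, ex_partial_fconst.
Qed.

Lemma continuous3_fadd f g : continuous3 f -> continuous3 g -> continuous3 (fadd f g).
Proof. intros Hf Hg t x y; apply (@continuous_plus _ R_AbsRing R_NormedModule); auto. Qed.

Lemma continuous3_fmul f g : continuous3 f -> continuous3 g -> continuous3 (fmul f g).
Proof. intros Hf Hg t x y; apply (@continuous_mult _ R_AbsRing); auto. Qed.

Lemma continuous3_fconst c : continuous3 (fconst c).
Proof. intros t x y; apply continuous_const. Qed.

Lemma continuous3_finv f : continuous3 f -> (forall t x y, f t x y <> 0) ->
  continuous3 (finv f).
Proof.
  intros Hf Hf0 t x y.
  apply (continuous_comp (uncurry3 f) Rinv); [apply Hf | apply continuous_Rinv, Hf0].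
Qed.

(* [smooth] quantifies over words of partial derivatives; the graded classes [Ck] give the
   induction on the order needed for closure under products and inverses. *)
Fixpoint Ck (n : nat) (f : field) : Prop :=
  match n with
  | 0 => continuous3 f
  | S n => continuous3 f /\ (forall i, ex_partial i f) /\ (forall i, Ck n (partial i f))
  end.

Definition Cinf (f : field) : Prop := forall n, Ck n f.

Lemma Ck_weaken n f : Ck (S n) f -> Ck n f.
Proof.
  revert f; induction n as [|n IH]; intros f [Hc [He Hp]]; [exact Hc|].
  repeat split; auto.
Qed.

Lemma Ck_fconst n : forall c, Ck n (fconst c).
Proof.
  induction n as [|n IH]; intro c; simpl; [apply continuous3_fconst|].
  repeat split; [apply continuous3_fconst | intro; apply ex_partial_fconst | ].
  intro i; now rewrite partial_fconst.
Qed.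

Lemma Ck_fadd n : forall f g, Ck n f -> Ck n g -> Ck n (fadd f g).
Proof.
  induction n as [|n IH]; intros f g Hf Hg; [now apply continuous3_fadd|].
  destruct Hf as [Cf [Ef Pf]], Hg as [Cg [Eg Pg]].
  repeat split; [now apply continuous3_fadd | intro; now apply ex_partial_fadd | ].
  intro i; rewrite partial_fadd; auto.
Qed.

Lemma Ck_fmul n : forall f g, Ck n f -> Ck n g -> Ck n (fmul f g).
Proof.
  induction n as [|n IH]; intros f g Hf Hg; [now apply continuous3_fmul|].
  pose proof (Ck_weaken _ _ Hf) as Hf'; pose proof (Ck_weaken _ _ Hg) as Hg'.
  destruct Hf as [Cf [Ef Pf]], Hg as [Cg [Eg Pg]].
  repeat split; [now apply continuous3_fmul | intro; now apply ex_partial_fmul | ].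
  intro i; rewrite partial_fmul; auto using Ck_fadd.
Qed.

Lemma Ck_finv n : forall f, (forall t x y, f t x y <> 0) -> Ck n f -> Ck n (finv f).
Proof.
  induction n as [|n IH]; intros f Hf0 Hf; [now apply continuous3_finv|].
  pose proof (Ck_weaken _ _ Hf) as Hf'.
  destruct Hf as [Cf [Ef Pf]].
  repeat split; [now apply continuous3_finv | intro; now apply ex_partial_finv | ].
  intro i; rewrite partial_finv; auto using Ck_fmul, Ck_fconst.
Qed.

Lemma smooth_partial i f : smooth f -> smooth (partial i f).
Proof.
  intros Hf l. specialize (Hf (l ++ i :: nil)).
  rewrite fold_right_app in Hf; exact Hf.
Qed.

Lemma smooth_Cinf f : smooth f -> Cinf f.
Proof.
  intros Hf n; revert f Hf; induction n as [|n IH]; intros f Hf.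
  - intros t x y; apply (Hf nil t x y).
  - repeat split.
    + intros t x y; apply (Hf nil t x y).
    + intros [|[|i]] t x y; apply (Hf nil t x y).
    + intro i; apply IH, smooth_partial, Hf.
Qed.

Lemma Cinf_partial i f : Cinf f -> Cinf (partial i f).
Proof. intros Hf n; exact (proj2 (proj2 (Hf (S n))) i). Qed.

Lemma Cinf_dt f : Cinf f -> Cinf (dt f). Proof. exact (Cinf_partial 0 f). Qed.
Lemma Cinf_dx f : Cinf f -> Cinf (dx f). Proof. exact (Cinf_partial 1 f). Qed.
Lemma Cinf_dy f : Cinf f -> Cinf (dy f). Proof. exact (Cinf_partial 2 f). Qed.

Lemma Cinf_ex_partial i f : Cinf f -> ex_partial i f.
Proof. intros Hf; exact (proj1 (proj2 (Hf 1%nat)) i). Qed.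

Lemma Cinf_continuous3 f : Cinf f -> continuous3 f.
Proof. intros Hf; exact (Hf 0%nat). Qed.

Lemma Cinf_fconst c : Cinf (fconst c).
Proof. intro n; apply Ck_fconst. Qed.

Lemma Cinf_fadd f g : Cinf f -> Cinf g -> Cinf (fadd f g).
Proof. intros Hf Hg n; now apply Ck_fadd. Qed.

Lemma Cinf_fmul f g : Cinf f -> Cinf g -> Cinf (fmul f g).
Proof. intros Hf Hg n; now apply Ck_fmul. Qed.

Lemma Cinf_finv f : (forall t x y, f t x y <> 0) -> Cinf f -> Cinf (finv f).
Proof. intros Hf0 Hf n; now apply Ck_finv. Qed.

Lemma Cinf_fopp f : Cinf f -> Cinf (fopp f).
Proof. intros Hf; rewrite fopp_fmul; auto using Cinf_fmul, Cinf_fconst. Qed.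

Lemma Cinf_fsub f g : Cinf f -> Cinf g -> Cinf (fsub f g).
Proof. intros Hf Hg; unfold fsub; auto using Cinf_fadd, Cinf_fopp. Qed.

Lemma Cinf_fpow f n : Cinf f -> Cinf (fpow f n).
Proof. intros Hf; induction n as [|n IH]; [apply Cinf_fconst | now apply Cinf_fmul]. Qed.

Lemma jacE a b : jac a b = fsub (fmul (dx a) (dy b)) (fmul (dy a) (dx b)).
Proof. reflexivity. Qed.

Lemma curl2E a1 a2 : curl2 a1 a2 = fsub (dx a2) (dy a1).
Proof. reflexivity. Qed.

Lemma lapE f : lap f = fadd (dx (dx f)) (dy (dy f)).
Proof. reflexivity. Qed.

Lemma lie1_xE v1 v2 a1 a2 : lie1_x v1 v2 a1 a2 =
  fadd (fadd (fadd (fmul v1 (dx a1)) (fmul v2 (dy a1))) (fmul a1 (dx v1))) (fmul a2 (dx v2)).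
Proof. reflexivity. Qed.

Lemma lie1_yE v1 v2 a1 a2 : lie1_y v1 v2 a1 a2 =
  fadd (fadd (fadd (fmul v1 (dx a2)) (fmul v2 (dy a2))) (fmul a1 (dy v1))) (fmul a2 (dy v2)).
Proof. reflexivity. Qed.

Lemma Cinf_jac a b : Cinf a -> Cinf b -> Cinf (jac a b).
Proof. intros; rewrite jacE; auto using Cinf_fsub, Cinf_fmul, Cinf_dx, Cinf_dy. Qed.

Lemma Cinf_curl2 a1 a2 : Cinf a1 -> Cinf a2 -> Cinf (curl2 a1 a2).
Proof. intros; rewrite curl2E; auto using Cinf_fsub, Cinf_dx, Cinf_dy. Qed.

Lemma Cinf_lap f : Cinf f -> Cinf (lap f).
Proof. intros; rewrite lapE; auto using Cinf_fadd, Cinf_dx, Cinf_dy. Qed.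

Lemma Cinf_lie1_x v1 v2 a1 a2 : Cinf v1 -> Cinf v2 -> Cinf a1 -> Cinf a2 ->
  Cinf (lie1_x v1 v2 a1 a2).
Proof. intros; rewrite lie1_xE; auto 6 using Cinf_fadd, Cinf_fmul, Cinf_dx, Cinf_dy. Qed.

Lemma Cinf_lie1_y v1 v2 a1 a2 : Cinf v1 -> Cinf v2 -> Cinf a1 -> Cinf a2 ->
  Cinf (lie1_y v1 v2 a1 a2).
Proof. intros; rewrite lie1_yE; auto 6 using Cinf_fadd, Cinf_fmul, Cinf_dx, Cinf_dy. Qed.

Create HintDb Cinf.
#[export] Hint Resolve Cinf_dt Cinf_dx Cinf_dy Cinf_fconst Cinf_fadd Cinf_fmul Cinf_fopp
  Cinf_fsub Cinf_fpow Cinf_jac Cinf_curl2 Cinf_lap Cinf_lie1_x Cinf_lie1_y : Cinf.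

Lemma dt_fsub f g : Cinf f -> Cinf g -> dt (fsub f g) = fsub (dt f) (dt g).
Proof. intros; apply (partial_fsub 0); now apply Cinf_ex_partial. Qed.
Lemma dx_fsub f g : Cinf f -> Cinf g -> dx (fsub f g) = fsub (dx f) (dx g).
Proof. intros; apply (partial_fsub 1); now apply Cinf_ex_partial. Qed.
Lemma dy_fsub f g : Cinf f -> Cinf g -> dy (fsub f g) = fsub (dy f) (dy g).
Proof. intros; apply (partial_fsub 2); now apply Cinf_ex_partial. Qed.
Lemma dx_fadd f g : Cinf f -> Cinf g -> dx (fadd f g) = fadd (dx f) (dx g).
Proof. intros; apply (partial_fadd 1); now apply Cinf_ex_partial. Qed.
Lemma dy_fadd f g : Cinf f -> Cinf g -> dy (fadd f g) = fadd (dy f) (dy g).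
Proof. intros; apply (partial_fadd 2); now apply Cinf_ex_partial. Qed.
Lemma dx_fmul f g : Cinf f -> Cinf g -> dx (fmul f g) = fadd (fmul (dx f) g) (fmul f (dx g)).
Proof. intros; apply (partial_fmul 1); now apply Cinf_ex_partial. Qed.
Lemma dy_fmul f g : Cinf f -> Cinf g -> dy (fmul f g) = fadd (fmul (dy f) g) (fmul f (dy g)).
Proof. intros; apply (partial_fmul 2); now apply Cinf_ex_partial. Qed.
Lemma dx_fopp f : Cinf f -> dx (fopp f) = fopp (dx f).
Proof. intros; apply (partial_fopp 1); now apply Cinf_ex_partial. Qed.
Lemma dy_fopp f : Cinf f -> dy (fopp f) = fopp (dy f).
Proof. intros; apply (partial_fopp 2); now apply Cinf_ex_partial. Qed.

Lemma continuous_pair {U V W : UniformSpace} (f : U -> V) (g : U -> W) (u : U) :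
  continuous f u -> continuous g u -> continuous (fun z => (f z, g z)) u.
Proof.
  intros Hf Hg; apply (continuous_comp_2 f g pair); auto.
  eapply continuous_ext; [|apply continuous_id]; now intros [].
Qed.

Lemma continuous3_comp f (h : R * R -> R * R * R) (w : R * R) :
  continuous3 f -> continuous h w -> continuous (fun w => uncurry3 f (h w)) w.
Proof.
  intros Hf Hh; apply (continuous_comp h (uncurry3 f)); [exact Hh|].
  destruct (h w) as [[t x] y]; apply Hf.
Qed.

Lemma Schwarz_continuous (F : R -> R -> R) (u v : R) :
  (forall a b, ex_derive (fun s => F s b) a) ->
  (forall a b, ex_derive (fun s => F a s) b) ->
  (forall a b, ex_derive (fun s => Derive (fun r => F s r) b) a) ->
  (forall a b, ex_derive (fun s => Derive (fun r => F r s) a) b) ->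
  continuous (fun w : R * R => Derive (fun s => Derive (fun r => F s r) (snd w)) (fst w)) (u, v) ->
  continuous (fun w : R * R => Derive (fun s => Derive (fun r => F r s) (fst w)) (snd w)) (u, v) ->
  Derive (fun s => Derive (fun r => F s r) v) u = Derive (fun s => Derive (fun r => F r s) u) v.
Proof.
  intros H1 H2 H3 H4 C1 C2; apply Schwarz.
  - exists (mkposreal 1 Rlt_0_1); auto.
  - now apply continuity_2d_pt_filterlim.
  - now apply continuity_2d_pt_filterlim.
Qed.

Ltac continuous_embedding :=
  repeat apply continuous_pair; auto using continuous_fst, continuous_snd, continuous_const.

Lemma dy_dx_comm f : Cinf f -> dy (dx f) = dx (dy f).
Proof.
  intros Hf; apply field_ext; intros t x y; symmetry.
  apply (Schwarz_continuous (fun u v => f t u v)).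
  - intros a b; exact (Cinf_ex_partial 1 f Hf t a b).
  - intros a b; exact (Cinf_ex_partial 2 f Hf t a b).
  - intros a b; exact (Cinf_ex_partial 1 _ (Cinf_dy f Hf) t a b).
  - intros a b; exact (Cinf_ex_partial 2 _ (Cinf_dx f Hf) t a b).
  - apply (continuous3_comp (dx (dy f)) (fun w => (t, fst w, snd w)) (x, y)).
    + apply Cinf_continuous3; auto with Cinf.
    + continuous_embedding.
  - apply (continuous3_comp (dy (dx f)) (fun w => (t, fst w, snd w)) (x, y)).
    + apply Cinf_continuous3; auto with Cinf.
    + continuous_embedding.
Qed.

Lemma dt_dx_comm f : Cinf f -> dt (dx f) = dx (dt f).
Proof.
  intros Hf; apply field_ext; intros t x y.
  apply (Schwarz_continuous (fun u v => f u v y)).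
  - intros a b; exact (Cinf_ex_partial 0 f Hf a b y).
  - intros a b; exact (Cinf_ex_partial 1 f Hf a b y).
  - intros a b; exact (Cinf_ex_partial 0 _ (Cinf_dx f Hf) a b y).
  - intros a b; exact (Cinf_ex_partial 1 _ (Cinf_dt f Hf) a b y).
  - apply (continuous3_comp (dt (dx f)) (fun w => (fst w, snd w, y)) (t, x)).
    + apply Cinf_continuous3; auto with Cinf.
    + continuous_embedding.
  - apply (continuous3_comp (dx (dt f)) (fun w => (fst w, snd w, y)) (t, x)).
    + apply Cinf_continuous3; auto with Cinf.
    + continuous_embedding.
Qed.

Lemma dt_dy_comm f : Cinf f -> dt (dy f) = dy (dt f).
Proof.
  intros Hf; apply field_ext; intros t x y.
  apply (Schwarz_continuous (fun u v => f u x v)).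
  - intros a b; exact (Cinf_ex_partial 0 f Hf a x b).
  - intros a b; exact (Cinf_ex_partial 2 f Hf a x b).
  - intros a b; exact (Cinf_ex_partial 0 _ (Cinf_dy f Hf) a x b).
  - intros a b; exact (Cinf_ex_partial 2 _ (Cinf_dt f Hf) a x b).
  - apply (continuous3_comp (dt (dy f)) (fun w => (fst w, x, snd w)) (t, y)).
    + apply Cinf_continuous3; auto with Cinf.
    + continuous_embedding.
  - apply (continuous3_comp (dy (dt f)) (fun w => (fst w, x, snd w)) (t, y)).
    + apply Cinf_continuous3; auto with Cinf.
    + continuous_embedding.
Qed.

Ltac expand_partials :=
  repeat first
    [ rewrite dx_fadd by auto with Cinf | rewrite dy_fadd by auto with Cinf
    | rewrite dt_fsub by auto with Cinf | rewrite dx_fsub by auto with Cinf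
    | rewrite dy_fsub by auto with Cinf | rewrite dx_fmul by auto with Cinf
    | rewrite dy_fmul by auto with Cinf | rewrite dx_fopp by auto with Cinf
    | rewrite dy_fopp by auto with Cinf | rewrite dy_dx_comm by auto with Cinf
    | rewrite dt_dx_comm by auto with Cinf | rewrite dt_dy_comm by auto with Cinf ].

Ltac pointwise_ring :=
  apply field_ext; intros; unfold fsub, fadd, fopp, fmul, fconst, div2; ring.

Section VectorCalculus.

Variables v1 v2 a1 a2 b1 b2 : field.
Hypotheses (Hv1 : Cinf v1) (Hv2 : Cinf v2) (Ha1 : Cinf a1) (Ha2 : Cinf a2)
  (Hb1 : Cinf b1) (Hb2 : Cinf b2).

Lemma lie2_expand w : Cinf w ->
  lie2 v1 v2 w = fadd (fadd (fmul v1 (dx w)) (fmul v2 (dy w))) (fmul w (div2 v1 v2)).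
Proof.
  intros Hw; apply field_ext; intros t x y; unfold lie2.
  rewrite dx_fmul, dy_fmul by assumption.
  unfold fadd, fmul, div2; ring.
Qed.

Lemma curl2_fadd : curl2 (fadd a1 b1) (fadd a2 b2) = fadd (curl2 a1 a2) (curl2 b1 b2).
Proof. rewrite !curl2E; expand_partials; pointwise_ring. Qed.

Lemma curl2_fsub : curl2 (fsub a1 b1) (fsub a2 b2) = fsub (curl2 a1 a2) (curl2 b1 b2).
Proof. rewrite !curl2E; expand_partials; pointwise_ring. Qed.

Lemma dt_curl2 : dt (curl2 a1 a2) = curl2 (dt a1) (dt a2).
Proof. rewrite !curl2E; expand_partials; reflexivity. Qed.

Lemma curl2_lie1 :
  curl2 (lie1_x v1 v2 a1 a2) (lie1_y v1 v2 a1 a2) = lie2 v1 v2 (curl2 a1 a2).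
Proof.
  rewrite lie2_expand, !curl2E, lie1_xE, lie1_yE by auto with Cinf.
  expand_partials; pointwise_ring.
Qed.

End VectorCalculus.

Lemma curl2_grad f : Cinf f -> curl2 (dx f) (dy f) = fconst 0.
Proof. intros Hf; rewrite curl2E; expand_partials; pointwise_ring. Qed.

Lemma curl2_fmul_grad r p : Cinf r -> Cinf p ->
  curl2 (fmul r (dx p)) (fmul r (dy p)) = jac r p.
Proof. intros Hr Hp; rewrite curl2E, jacE; expand_partials; pointwise_ring. Qed.

Lemma curl2_potential_form v1 v2 w z : Cinf v1 -> Cinf v2 -> Cinf w -> Cinf z ->
  curl2 (fadd v1 (fmul w (dx z))) (fadd v2 (fmul w (dy z))) = fadd (curl2 v1 v2) (jac w z).
Proof. intros; rewrite curl2_fadd, curl2_fmul_grad by auto with Cinf; reflexivity. Qed.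

Lemma div2_stream psi : Cinf psi -> div2 (fopp (dy psi)) (dx psi) = fconst 0.
Proof.
  intros Hpsi; apply field_ext; intros t x y; unfold div2.
  expand_partials; unfold fopp, fconst; ring.
Qed.

Lemma curl2_stream psi : Cinf psi -> curl2 (fopp (dy psi)) (dx psi) = lap psi.
Proof. intros Hpsi; rewrite curl2E, lapE; expand_partials; pointwise_ring. Qed.

Lemma lie2_stream psi w : Cinf psi -> Cinf w -> lie2 (fopp (dy psi)) (dx psi) w = jac psi w.
Proof.
  intros Hpsi Hw; rewrite lie2_expand, div2_stream, jacE by auto with Cinf.
  pointwise_ring.
Qed.

Theorem vorticity_transport v1 v2 a1 a2 varpi r p :
  Cinf v1 -> Cinf v2 -> Cinf a1 -> Cinf a2 -> Cinf varpi -> Cinf r -> Cinf p ->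
  fadd (dt a1) (lie1_x v1 v2 a1 a2) = fsub (dx varpi) (fmul r (dx p)) ->
  fadd (dt a2) (lie1_y v1 v2 a1 a2) = fsub (dy varpi) (fmul r (dy p)) ->
  fadd (dt (curl2 a1 a2)) (lie2 v1 v2 (curl2 a1 a2)) = fopp (jac r p).
Proof.
  intros Hv1 Hv2 Ha1 Ha2 Hvarpi Hr Hp Hmom1 Hmom2.
  rewrite dt_curl2, <- curl2_lie1, <- curl2_fadd, Hmom1, Hmom2 by auto with Cinf.
  rewrite curl2_fsub, curl2_grad, curl2_fmul_grad by auto with Cinf.
  pointwise_ring.
Qed.

Theorem mainTheorem6
  (g eps : R)
  (v1 v2 D rho p zeta what psi : field)
  (* regularity *)
  (Hv1 : smooth v1) (Hv2 : smooth v2) (Hrho : smooth rho) (Hp : smooth p)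
  (Hzeta : smooth zeta) (Hwhat : smooth what) (Hpsi : smooth psi)
  (Hrho0 : forall t x y, rho t x y <> 0)
  (Hden : forall t x y, 1 + eps * (dx zeta t x y ^ 2 + dy zeta t x y ^ 2) <> 0) :
  (* auxiliary quantities *)
  let wtil : field := fun t x y =>
      what t x y / (1 + eps * (dx zeta t x y ^ 2 + dy zeta t x y ^ 2)) in
  let varpi : field := fun t x y =>
      / 2 * (v1 t x y ^ 2 + v2 t x y ^ 2 + what t x y ^ 2) - g * zeta t x y in
  let mutil : field := fun t x y => D t x y * rho t x y * wtil t x y in
  let rinv : field := fun t x y => / rho t x y in
  (* the 1-form  vhat . dx + wtil dzeta  has components a1, a2 *)
  let a1 : field := fun t x y => v1 t x y + wtil t x y * dx zeta t x y in
  let a2 : field := fun t x y => v2 t x y + wtil t x y * dy zeta t x y in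
  (* WCIFS equations *)
  (forall t x y, D t x y = 1) ->
  (forall t x y, dt a1 t x y + lie1_x v1 v2 a1 a2 t x y
                 = dx varpi t x y - / rho t x y * dx p t x y) ->
  (forall t x y, dt a2 t x y + lie1_y v1 v2 a1 a2 t x y
                 = dy varpi t x y - / rho t x y * dy p t x y) ->
  (forall t x y, dt D t x y + div2 (fmul D v1) (fmul D v2) t x y = 0) ->
  (forall t x y, dt rho t x y + v1 t x y * dx rho t x y + v2 t x y * dy rho t x y = 0) ->
  (forall t x y, dt zeta t x y + v1 t x y * dx zeta t x y + v2 t x y * dy zeta t x y
                 = what t x y * (1 + eps * (dx zeta t x y ^ 2 + dy zeta t x y ^ 2))) ->
  (forall t x y, dt wtil t x y + v1 t x y * dx wtil t x y + v2 t x y * dy wtil t x y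
                 = - g + 2 * eps / (D t x y * rho t x y)
                     * div2 (fun t x y => what t x y * mutil t x y * dx zeta t x y)
                            (fun t x y => what t x y * mutil t x y * dy zeta t x y) t x y) ->
  (* stream function: vhat = zhat x grad psi *)
  (forall t x y, v1 t x y = - dy psi t x y) ->
  (forall t x y, v2 t x y = dx psi t x y) ->
  (* conclusion 1: (d_t + L_vhat)((curl vhat + grad wtil x grad zeta) . dS)
                    = - grad rho^-1 x grad p . dS *)
  (forall t x y,
      dt (fadd (curl2 v1 v2) (jac wtil zeta)) t x y
      + lie2 v1 v2 (fadd (curl2 v1 v2) (jac wtil zeta)) t x y
      = - jac rinv p t x y)
  /\
  (* conclusion 2: d_t q + J(psi, q) = - J(rho^-1, p),  q = Lap psi + J(wtil, zeta) *)
  (let q : field := fadd (lap psi) (jac wtil zeta) in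
   forall t x y, dt q t x y + jac psi q t x y = - jac rinv p t x y).
Proof.
  intros wtil varpi mutil rinv a1 a2 _ Hmom1 Hmom2 _ _ _ _ Hpsi1 Hpsi2.
  apply smooth_Cinf in Hv1, Hv2, Hrho, Hp, Hzeta, Hwhat, Hpsi.
  assert (Hwtil : Cinf wtil).
  { change (Cinf (fmul what (finv
      (fadd (fconst 1) (fmul (fconst eps) (fadd (fpow (dx zeta) 2) (fpow (dy zeta) 2))))))).
    apply Cinf_fmul, Cinf_finv; auto 8 with Cinf. }
  assert (Hvarpi : Cinf varpi).
  { change (Cinf (fsub (fmul (fconst (/ 2)) (fadd (fadd (fpow v1 2) (fpow v2 2)) (fpow what 2)))
                       (fmul (fconst g) zeta))).
    auto 8 with Cinf. }
  assert (Hrinv : Cinf rinv) by (apply Cinf_finv; assumption).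
  assert (Ha1 : Cinf (fadd v1 (fmul wtil (dx zeta)))) by auto with Cinf.
  assert (Ha2 : Cinf (fadd v2 (fmul wtil (dy zeta)))) by auto with Cinf.
  assert (Hpv : fadd (dt (curl2 a1 a2)) (lie2 v1 v2 (curl2 a1 a2)) = fopp (jac rinv p)).
  { apply (vorticity_transport _ _ _ _ varpi); auto; apply field_ext; assumption. }
  assert (Hvort : curl2 a1 a2 = fadd (curl2 v1 v2) (jac wtil zeta))
    by (apply curl2_potential_form; assumption).
  rewrite Hvort in Hpv.
  split.
  - intros t x y; exact (f_equal (fun h => h t x y) Hpv).
  - intros q t x y.
    assert (Hv1e : v1 = fopp (dy psi)) by (apply field_ext; exact Hpsi1).
    assert (Hv2e : v2 = dx psi) by (apply field_ext; exact Hpsi2).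
    rewrite Hv1e, Hv2e, curl2_stream, lie2_stream in Hpv by auto with Cinf.
    exact (f_equal (fun h => h t x y) Hpv).
Qed.
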